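(* Assume that for some $a_1>0$ and a constant $C>0$, with probability tending to one, $\max_{j\in[p]}\|\widehat{\partial_jm}-\partial_jm\|_2^2\le Cn^{-a_1}$, and let $a_2,b>0$. Then: (a) for every node $v\notin\mathcal I^\star$ there is $c>0$ such that $P\big(\hat w_v\ge c\, n^{\min(a_1,a_2)b}\big)\to1$; (b) for every node $v\in\mathcal I^\star$, $\hat w_v=O_P\big(1+n^{(a_2-a_1)b}\big)$.
   Context: A known rooted tree $\mathcal T$ with $T$ nodes has exactly $p$ leaves, identified with the coordinates $1,\dots,p$ of $X\in\mathbb R^p$, where $Y=m(X)+\varepsilon$ for a differentiable regression function $m$. For a node $v$, $\mathrm{le}(v)$ denotes the set of leaves that are equal to $v$ or are descendants of $v$; $\mathrm{sib}(v)$ denotes the set of nodes $u\neq v$ having the same parent as $v$ (empty for the root). Derivatives and norms. $\partial_j m$ is the partial derivative of $m$ w.r.t. the $j$-th coordinate of $X$ ($j=1,\dots,p$), and $\|f\|_2$ is the $L^2(P_X)$ norm; statements ''$\partial_jm=\partial_km$'', ''$\partial_jm\neq0$'' are meant as elements of $L^2(P_X)$. $\widehat{\partial_jm}$ are (data-dependent) pilot estimators of $\partial_jm$. Target aggregation set. $\mathcal I^\star$ is the set of nodes $v$ such that: (i) $\partial_jm\neq0$ for all $j\in\mathrm{le}(v)$; (ii) $\partial_jm=\partial_km$ for all $j,k\in\mathrm{le}(v)$; (iii) there exist $s\in\bigcup_{u\in\mathrm{sib}(v)}\mathrm{le}(u)$ and $j\in\mathrm{le}(v)$ with $\partial_sm\neq\partial_jm$.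 Adaptive weights. For each node $v$ set $C_{v,1}=\binom{|\mathrm{le}(v)|}{2}^{-1}\sum_{\{j,k\}\subseteq\mathrm{le}(v),\,j\ne k}\|\widehat{\partial_jm}-\widehat{\partial_km}\|_2^2$ (and $C_{v,1}=0$ if $|\mathrm{le}(v)|=1$), $C_{v,2}=|\mathrm{le}(v)|^{-1}\sum_{j\in\mathrm{le}(v)}\|\widehat{\partial_jm}\|_2^2$, $C_{v,3}=\big(|S_v|\,|\mathrm{le}(v)|\big)^{-1}\sum_{j\in\mathrm{le}(v)}\sum_{l\in S_v}\|\widehat{\partial_jm}-\widehat{\partial_lm}\|_2^2$ with $S_v=\bigcup_{u\in\mathrm{sib}(v)}\mathrm{le}(u)$ (and $C_{v,3}=0$ if $S_v=\emptyset$), and $\hat w_v=(n^{a_2}C_{v,1})^b+C_{v,2}^{-b}+C_{v,3}^{-b}$ (with $0^{-b}=+\infty$). *)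

From HB Require Import structures.
From mathcomp Require Import all_boot all_order all_algebra.
From mathcomp Require Import all_classical all_reals all_analysis.
Set Implicit Arguments. Unset Strict Implicit. Unset Printing Implicit Defensive.
Import Order.TTheory GRing.Theory Num.Theory.
Import numFieldNormedType.Exports.
Local Open Scope classical_set_scope.
Local Open Scope ring_scope.

(* Nodes are 'I_T; [par v] is the parent of v (None for the root).      *)
Definition par_rel (T : nat) (par : 'I_T -> option 'I_T) : rel 'I_T :=
  fun u w => par u == Some w.

(* [anc par u v] : v is equal to u or is an ancestor of u. *)
Definition anc (T : nat) (par : 'I_T -> option 'I_T) (u v : 'I_T) : bool :=
  connect (par_rel par) u v.

(* par describes a rooted tree: a root r without parent, reached from every node
   by following parents (this forces acyclicity). *)
Definition is_rooted_tree (T : nat) (par : 'I_T -> option 'I_T) : Prop :=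
  exists r : 'I_T, par r = None /\ forall v, anc par v r.

Definition is_leaf (T : nat) (par : 'I_T -> option 'I_T) (v : 'I_T) : bool :=
  [forall u, par u != Some v].

Definition leaves_identified (T p : nat) (par : 'I_T -> option 'I_T)
  (leaf : 'I_p -> 'I_T) : Prop :=
  injective leaf /\ (forall v, is_leaf par v <-> exists j, leaf j = v).

Definition le_set (T p : nat) (par : 'I_T -> option 'I_T) (leaf : 'I_p -> 'I_T)
  (v : 'I_T) : {set 'I_p} := [set j | anc par (leaf j) v].

Definition sib (T : nat) (par : 'I_T -> option 'I_T) (v : 'I_T) : {set 'I_T} :=
  [set u | (u != v) && (par v != None) && (par u == par v)].

Definition S_set (T p : nat) (par : 'I_T -> option 'I_T) (leaf : 'I_p -> 'I_T)
  (v : 'I_T) : {set 'I_p} := \bigcup_(u in sib par v) le_set par leaf u.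

(* P_X is the law of X : Omega -> R^p under P, so
   ||f||_{L^2(P_X)} = ( \int |f(X w)|^2 dP(w) )^{1/2}. *)
Definition L2norm {R : realType} {d} {Omega : measurableType d} {p : nat}
  (P : probability Omega R) (X : Omega -> 'rV[R]_p) (f : 'rV[R]_p -> R) : \bar R :=
  Lnorm P 2%:E (EFin \o (f \o X)).

Definition inL2 {R : realType} {d} {Omega : measurableType d} {p : nat}
  (P : probability Omega R) (X : Omega -> 'rV[R]_p) (f : 'rV[R]_p -> R) : Prop :=
  measurable_fun [set: Omega] (f \o X) /\ (L2norm P X f < +oo)%E.

(* real-valued L^2 norm (meaningful for elements of L^2) *)
Definition nrm2 {R : realType} {d} {Omega : measurableType d} {p : nat}
  (P : probability Omega R) (X : Omega -> 'rV[R]_p) (f : 'rV[R]_p -> R) : R :=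
  fine (L2norm P X f).

Definition partial {R : realType} {p : nat} (m : 'rV[R]_p -> R) (j : 'I_p)
  : 'rV[R]_p -> R := fun x => 'D_(delta_mx 0 j) m x.

Definition in_Istar {R : realType} {d} {Omega : measurableType d} {T p : nat}
  (P : probability Omega R) (X : Omega -> 'rV[R]_p)
  (par : 'I_T -> option 'I_T) (leaf : 'I_p -> 'I_T)
  (D : 'I_p -> 'rV[R]_p -> R) (v : 'I_T) : Prop :=
  [/\ (forall j, j \in le_set par leaf v -> nrm2 P X (D j) <> 0),
      (forall j k, j \in le_set par leaf v -> k \in le_set par leaf v ->
          nrm2 P X (D j \- D k) = 0) &
      (exists s j, [/\ s \in S_set par leaf v, j \in le_set par leaf v &
          nrm2 P X (D s \- D j) <> 0])].

Section Weights.
Context {R : realType} {d} {Omega : measurableType d} {T p : nat}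
  (P : probability Omega R) (X : Omega -> 'rV[R]_p)
  (par : 'I_T -> option 'I_T) (leaf : 'I_p -> 'I_T)
  (E : 'I_p -> 'rV[R]_p -> R) .

Let sq (f : 'rV[R]_p -> R) : R := (nrm2 P X f) ^+ 2.

Definition C1 (v : 'I_T) : R :=
  let L := le_set par leaf v in
  if #|L| == 1%N then 0 else
  ('C(#|L|, 2)%:R)^-1 * \sum_(j in L) \sum_(k in L | (j < k)%N) sq (E j \- E k).

Definition C2 (v : 'I_T) : R :=
  let L := le_set par leaf v in
  (#|L|%:R)^-1 * \sum_(j in L) sq (E j).

Definition C3 (v : 'I_T) : R :=
  let L := le_set par leaf v in
  let S := S_set par leaf v in
  if #|S| == 0%N then 0 else
  ((#|S| * #|L|)%:R)^-1 * \sum_(j in L) \sum_(l in S) sq (E j \- E l).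

Definition negpow (x b : R) : \bar R := if x == 0 then +oo%E else (x `^ (- b))%:E.

Definition what (n : nat) (a2 b : R) (v : 'I_T) : \bar R :=
  ((((n%:R `^ a2) * C1 v) `^ b)%:E + negpow (C2 v) b + negpow (C3 v) b)%E.
End Weights.

(* Events need not be measurable: we use inner probability. *)
Definition wp_to_one {R : realType} {d} {Omega : measurableType d}
  (P : probability Omega R) (A : nat -> set Omega) : Prop :=
  exists B : nat -> set Omega,
    (forall n, measurable (B n) /\ B n `<=` A n) /\
    (fun n => P (B n)) @ \oo --> 1%E.

Definition O_in_prob {R : realType} {d} {Omega : measurableType d}
  (P : probability Omega R) (Z : nat -> Omega -> \bar R) (r : nat -> R) : Prop :=
  forall eps : R, 0 < eps -> exists M : R, exists N : nat,
    forall n, (N <= n)%N -> exists B : set Omega,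
      [/\ measurable B, B `<=` [set w | (`|Z n w| <= (M * r n)%:E)%E]
        & (1 - eps)%:E <= P B]%E.

From mathcomp Require Import all_boot all_order all_algebra.
From mathcomp Require Import all_classical all_reals all_analysis.
From mathcomp Require Import lra.
Import Order.TTheory GRing.Theory Num.Theory.
Import numFieldNormedType.Exports.
Local Open Scope classical_set_scope.
Local Open Scope ring_scope.

(* Write eps_n = C n^(-a1). On the event where every pilot error is at most eps_n, the
   triangle inequality in L^2(P_X) puts each estimated squared distance
   ||d_j - d_k||^2 (and each ||d_j||^2) within O(eps_n) of 0 when the true one vanishes,
   and above a quarter of the true one once eps_n is small enough.
   If v is not in I*, then either two derivatives in le(v) differ, so C_{v,1} stays
   bounded below and the first term of w_v grows like n^(a2 b); or they all vanish, or
   they all agree with those of the siblings, so C_{v,2} or C_{v,3} is O(n^(-a1)) and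
   its power -b grows like n^(a1 b). If v is in I*, then C_{v,1} = O(n^(-a1)) makes the
   first term O(n^((a2-a1) b)), while C_{v,2} and C_{v,3} stay bounded away from 0. *)

Section L2Norm.
Context {R : realType} {d} {Omega : measurableType d} {p : nat}
  {P : probability Omega R} {X : Omega -> 'rV[R]_p}.
Implicit Types f g h : 'rV[R]_p -> R.
Local Notation N := (nrm2 P X).
Local Notation inL2 := (inL2 P X).

Lemma nrm2_ge0 f : 0 <= N f.
Proof. exact/fine_ge0/Lnorm_ge0. Qed.

Lemma L2normN f : L2norm P X (\- f) = L2norm P X f.
Proof.
by rewrite /L2norm -oppe_Lnorm; apply: eq_Lnorm => x /=; rewrite ?EFinN ?oppeK.
Qed.

Lemma L2normD_le {f g} : measurable_fun [set: Omega] (f \o X) ->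
  measurable_fun [set: Omega] (g \o X) ->
  (L2norm P X (f \+ g)%R <= L2norm P X f + L2norm P X g)%E.
Proof. by move=> mf mg; apply: minkowski_EFin => //; lra. Qed.

Lemma inL2N {f} : inL2 f -> inL2 (\- f).
Proof. by move=> [mf lf]; split; [exact: measurableT_comp | rewrite L2normN]. Qed.

Lemma inL2D {f g} : inL2 f -> inL2 g -> inL2 (f \+ g).
Proof.
move=> [mf lf] [mg lg]; split; first exact: measurable_realfun.measurable_funD.
exact: le_lt_trans (L2normD_le mf mg) (lte_add_pinfty lf lg).
Qed.

Lemma inL2B {f g} : inL2 f -> inL2 g -> inL2 (f \- g).
Proof. by move=> hf /inL2N; apply: inL2D. Qed.

Lemma nrm2D_le {f g} : inL2 f -> inL2 g -> N (f \+ g) <= N f + N g.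
Proof.
move=> hf hg; have hfg := inL2D hf hg; have fin h : inL2 h -> L2norm P X h \is a fin_num.
  by move=> [_ lh]; rewrite ge0_fin_numE // Lnorm_ge0.
rewrite /nrm2 -lee_fin EFinD !fineK ?fin //.
exact: L2normD_le hf.1 hg.1.
Qed.

Lemma nrm2_subC f g : N (f \- g) = N (g \- f).
Proof.
rewrite /nrm2 -L2normN; congr (fine (L2norm _ _ _)).
by apply/funext => x /=; rewrite opprB.
Qed.

Lemma nrm2_subrr f : N (f \- f) = 0.
Proof.
rewrite /nrm2 /L2norm (@eq_Lnorm _ _ _ _ _ _ (cst 0%E)) ?Lnorm0 // => x /=.
by rewrite subrr.
Qed.

Lemma nrm2_sub_le {f g h} : inL2 f -> inL2 g -> inL2 h ->
  N (f \- g) <= N (f \- h) + N (h \- g).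
Proof.
move=> hf hg hh; have := nrm2D_le (inL2B hf hh) (inL2B hh hg).
by congr (N _ <= _); apply/funext => x /=; rewrite addrA subrK.
Qed.

Lemma nrm2_sub_le3 {f g f' g'} : inL2 f -> inL2 g -> inL2 f' -> inL2 g' ->
  N (f \- g) <= N (f \- f') + N (f' \- g') + N (g' \- g).
Proof.
move=> hf hg hf' hg'; apply: (le_trans (nrm2_sub_le hf hg hf')).
by rewrite -addrA lerD2l nrm2_sub_le.
Qed.

Lemma nrm2_le_sub {f g} : inL2 f -> inL2 g -> N f <= N (f \- g) + N g.
Proof.
move=> hf hg; have := nrm2D_le (inL2B hf hg) hg.
by congr (N _ <= _); apply/funext => x /=; rewrite subrK.
Qed.
End L2Norm.

Section RealIneq.
Context {R : realFieldType}.

Lemma sqr_le_4mul_of_le_add {x a b e : R} : 0 <= x -> 0 <= a -> 0 <= b ->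
  x <= a + b -> a ^+ 2 <= e -> b ^+ 2 <= e -> x ^+ 2 <= 4 * e.
Proof. move=> x0 a0 b0 xab ae be; have := sqr_ge0 (a - b); nra. Qed.

Lemma sqr_ge_quarter_of_le_add {x y a b e : R} : 0 <= y -> 0 <= a -> 0 <= b ->
  y <= x + a + b -> a ^+ 2 <= e -> b ^+ 2 <= e -> e <= y ^+ 2 / 16 ->
  y ^+ 2 / 4 <= x ^+ 2.
Proof.
move=> y0 a0 b0 yxab ae be ey.
have ay : a <= y / 4 by nra.
have by4 : b <= y / 4 by nra.
nra.
Qed.

Lemma invr_natr_le1 (n : nat) : (n%:R : R)^-1 <= 1.
Proof. by case: n => [|n]; rewrite ?invr0 // invf_le1 ?ler1n ?ltr0n. Qed.
End RealIneq.

Section Sums.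
Context {R : numDomainType} {I : finType}.
Implicit Types (Pr : pred I) (F : I -> R).

Lemma sum_le_card_mul Pr F K : 0 <= K -> (forall i, Pr i -> F i <= K) ->
  \sum_(i | Pr i) F i <= #|I|%:R * K.
Proof.
move=> K0 FK; apply: (@le_trans _ _ (\sum_(i : I) K)).
  by rewrite big_mkcond /=; apply: ler_sum => i _; case: ifP => // /FK.
by rewrite sumr_const mulr_natl.
Qed.

Lemma ler_sum_term Pr F i0 : Pr i0 -> (forall i, Pr i -> 0 <= F i) ->
  F i0 <= \sum_(i | Pr i) F i.
Proof.
by move=> Pi0 F0; rewrite (bigD1 i0) //= lerDl; apply: sumr_ge0 => i /andP[/F0].
Qed.
End Sums.

Section Weights.
Context {R : realType} {d} {Omega : measurableType d} {T p : nat}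
  {P : probability Omega R} {X : Omega -> 'rV[R]_p}
  {par : 'I_T -> option 'I_T} {leaf : 'I_p -> 'I_T}
  {E : 'I_p -> 'rV[R]_p -> R} {v : 'I_T}.
Local Notation N := (nrm2 P X).
Local Notation L := (le_set par leaf v).
Local Notation S := (S_set par leaf v).

Lemma C1_ge0 : 0 <= C1 P X par leaf E v.
Proof.
rewrite /C1 /=; case: ifP => // _.
rewrite mulr_ge0 ?invr_ge0 //.
by apply: sumr_ge0 => j _; apply: sumr_ge0 => k _; apply: sqr_ge0.
Qed.

Lemma C2_ge0 : 0 <= C2 P X par leaf E v.
Proof.
by rewrite /C2 /= mulr_ge0 ?invr_ge0 //; apply: sumr_ge0 => j _; apply: sqr_ge0.
Qed.

Lemma C3_ge0 : 0 <= C3 P X par leaf E v.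
Proof.
rewrite /C3 /=; case: ifP => // _.
rewrite mulr_ge0 ?invr_ge0 //.
by apply: sumr_ge0 => j _; apply: sumr_ge0 => k _; apply: sqr_ge0.
Qed.

Lemma C1_le K : 0 <= K ->
  (forall j k, j \in L -> k \in L -> N (E j \- E k) ^+ 2 <= K) ->
  C1 P X par leaf E v <= p%:R * (p%:R * K).
Proof.
move=> K0 EK; rewrite /C1 /=; case: ifP => _; first by rewrite !mulr_ge0.
apply: le_trans (ler_piMl _ (invr_natr_le1 _)) _.
  by apply: sumr_ge0 => j _; apply: sumr_ge0 => k _; apply: sqr_ge0.
rewrite -[in X in _ <= X](card_ord p).
apply: sum_le_card_mul => [|j jL]; first by rewrite mulr_ge0.
by apply: sum_le_card_mul => // k /andP[kL _]; apply: EK.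
Qed.

Lemma C2_le K : 0 <= K -> (forall j, j \in L -> N (E j) ^+ 2 <= K) ->
  C2 P X par leaf E v <= p%:R * K.
Proof.
move=> K0 EK; rewrite /C2 /=.
apply: le_trans (ler_piMl _ (invr_natr_le1 _)) _.
  by apply: sumr_ge0 => j _; apply: sqr_ge0.
by rewrite -[in X in _ <= X](card_ord p); apply: sum_le_card_mul.
Qed.

Lemma C3_le K : 0 <= K ->
  (forall j l, j \in L -> l \in S -> N (E j \- E l) ^+ 2 <= K) ->
  C3 P X par leaf E v <= p%:R * (p%:R * K).
Proof.
move=> K0 EK; rewrite /C3 /=; case: ifP => _; first by rewrite !mulr_ge0.
apply: le_trans (ler_piMl _ (invr_natr_le1 _)) _.
  by apply: sumr_ge0 => j _; apply: sumr_ge0 => k _; apply: sqr_ge0.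
rewrite -[in X in _ <= X](card_ord p).
apply: sum_le_card_mul => [|j jL]; first by rewrite mulr_ge0.
by apply: sum_le_card_mul => // l lS; apply: EK.
Qed.

Lemma C1_ge_term {j k} : j \in L -> k \in L -> j != k ->
  ('C(#|L|, 2)%:R)^-1 * N (E j \- E k) ^+ 2 <= C1 P X par leaf E v.
Proof.
move=> jL kL; wlog jk : j k jL kL / (j < k)%N => [hwlog|_].
  case: (ltngtP j k) => [jk|kj|/val_inj ->]; rewrite ?eqxx //; first exact: hwlog.
  by rewrite nrm2_subC eq_sym; apply: hwlog.
have L_gt1 : (1 < #|L|)%N by apply/card_gt1P; exists j, k; rewrite -val_eqE neq_ltn jk.
rewrite /C1 /= ifN ?neq_ltn ?L_gt1 ?orbT //.
rewrite ler_wpM2l ?invr_ge0 //.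
apply: (le_trans _ (ler_sum_term _ _ _ jL _)) => [|i _]; last first.
  by apply: sumr_ge0 => k' _; apply: sqr_ge0.
apply: (ler_sum_term (fun k => (k \in L) && (j < k)%N)) => [|i _].
  by rewrite kL.
exact: sqr_ge0.
Qed.

Lemma C2_ge_term {j} : j \in L ->
  (#|L|%:R)^-1 * N (E j) ^+ 2 <= C2 P X par leaf E v.
Proof.
move=> jL; rewrite /C2 /= ler_wpM2l ?invr_ge0 //.
by apply: ler_sum_term => // i _; apply: sqr_ge0.
Qed.

Lemma C3_ge_term {j l} : j \in L -> l \in S ->
  ((#|S| * #|L|)%:R)^-1 * N (E j \- E l) ^+ 2 <= C3 P X par leaf E v.
Proof.
move=> jL lS; have S_gt0 : (0 < #|S|)%N by apply/card_gt0P; exists l.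
rewrite /C3 /= ifN -?lt0n // ler_wpM2l ?invr_ge0 //.
apply: (le_trans _ (ler_sum_term _ _ _ jL _)) => [|i _]; last first.
  by apply: sumr_ge0 => k _; apply: sqr_ge0.
by apply: ler_sum_term => // i _; apply: sqr_ge0.
Qed.
End Weights.

Section PilotError.
Context {R : realType} {d} {Omega : measurableType d} {p : nat}
  {P : probability Omega R} {X : Omega -> 'rV[R]_p}
  {E D : 'I_p -> 'rV[R]_p -> R} {eps : R}.
Hypotheses (hE : forall j, inL2 P X (E j)) (hD : forall j, inL2 P X (D j))
  (herr : forall j, nrm2 P X (E j \- D j) ^+ 2 <= eps).
Local Notation N := (nrm2 P X).

Lemma pilot_sub_sqr_le {j k} : N (D j \- D k) = 0 -> N (E j \- E k) ^+ 2 <= 4 * eps.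
Proof.
move=> Djk0; have := nrm2_sub_le3 (hE j) (hE k) (hD j) (hD k).
rewrite Djk0 addr0 (nrm2_subC (D k)) => le_jk.
by apply: (sqr_le_4mul_of_le_add _ _ _ le_jk); rewrite ?nrm2_ge0.
Qed.

Lemma pilot_sqr_le {j} : N (D j) = 0 -> N (E j) ^+ 2 <= eps.
Proof.
move=> Dj0; apply: le_trans (herr j); rewrite ler_sqr ?nnegrE ?nrm2_ge0 //.
by have := nrm2_le_sub (hE j) (hD j); rewrite Dj0 addr0.
Qed.

Lemma pilot_sub_sqr_ge {j k} : eps <= N (D j \- D k) ^+ 2 / 16 ->
  N (D j \- D k) ^+ 2 / 4 <= N (E j \- E k) ^+ 2.
Proof.
move=> small; have := nrm2_sub_le3 (hD j) (hD k) (hE j) (hE k).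
rewrite (nrm2_subC (D j) (E j)) (addrC (N (E j \- D j))) => le_jk.
by apply: (sqr_ge_quarter_of_le_add _ _ _ le_jk (herr j) (herr k)); rewrite ?nrm2_ge0.
Qed.

Lemma pilot_sqr_ge {j} : eps <= N (D j) ^+ 2 / 16 -> N (D j) ^+ 2 / 4 <= N (E j) ^+ 2.
Proof.
move=> small; have := nrm2_le_sub (hD j) (hE j); rewrite nrm2_subC => le_j.
have le_j' : N (D j) <= N (E j) + N (E j \- D j) + N (E j \- D j).
  by apply: (le_trans le_j); rewrite addrC lerDl nrm2_ge0.
by apply: (sqr_ge_quarter_of_le_add _ _ _ le_j' (herr j) (herr j)); rewrite ?nrm2_ge0.
Qed.
End PilotError.

Section Powers.
Context {R : realType}.

Lemma powRN_le {x y b : R} : 0 < x -> x <= y -> 0 <= b -> y `^ (- b) <= x `^ (- b).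
Proof.
move=> x0 xy b0; rewrite !powRN lef_pV2 ?posrE ?powR_gt0 //; last lra.
by apply: ge0_ler_powR; rewrite ?nnegrE //; lra.
Qed.

Lemma negpow_ge0 (x b : R) : (0 <= negpow x b)%E.
Proof. by rewrite /negpow; case: ifP => // _; rewrite lee_fin powR_ge0. Qed.

Lemma negpow_le {c x b : R} : 0 < c -> c <= x -> 0 <= b ->
  (negpow x b <= (c `^ (- b))%:E)%E.
Proof.
move=> c0 cx b0; rewrite /negpow gt_eqF ?lee_fin ?powRN_le //.
exact: lt_le_trans cx.
Qed.

Lemma powR_growth_le {t c x a e b : R} : 1 <= t -> e <= a -> 0 < c -> c <= x -> 0 <= b ->
  c `^ b * t `^ (e * b) <= (t `^ a * x) `^ b.
Proof.
move=> t1 ea c0 cx b0; have t0 : 0 <= t by lra.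
apply: (@le_trans _ _ ((t `^ a * c) `^ b)); last first.
  by apply: ge0_ler_powR; rewrite ?nnegrE ?mulr_ge0 ?powR_ge0 ?ler_wpM2l ?powR_ge0 //;
    lra.
rewrite powRM ?powR_ge0 ?(ltW c0) // -powRrM mulrC ler_wpM2r ?powR_ge0 //.
by rewrite ler_powR // ler_wpM2r.
Qed.

Lemma negpow_growth_le {t K x a e b : R} : 1 <= t -> e <= a -> 0 < K -> 0 <= x ->
  x <= K * t `^ (- a) -> 0 <= b ->
  ((K `^ (- b) * t `^ (e * b))%:E <= negpow x b)%E.
Proof.
move=> t1 ea K0 x0 xK b0; rewrite /negpow; case: ifPn => [_|xn0]; first exact: leey.
have x_gt0 : 0 < x by rewrite lt_neqAle eq_sym xn0.
rewrite lee_fin; apply: (le_trans _ (powRN_le x_gt0 xK b0)).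
rewrite powRM ?powR_ge0 ?(ltW K0) // -powRrM mulrNN ler_wpM2l ?powR_ge0 //.
by rewrite ler_powR // ler_wpM2r.
Qed.

Lemma powR_decay_le {t K x a1 a2 b : R} : 0 < t -> 0 <= K -> 0 <= x ->
  x <= K * t `^ (- a1) -> 0 <= b ->
  (t `^ a2 * x) `^ b <= K `^ b * t `^ ((a2 - a1) * b).
Proof.
move=> t0 K0 x0 xK b0.
apply: (@le_trans _ _ ((t `^ a2 * (K * t `^ (- a1))) `^ b)).
  by apply: ge0_ler_powR; rewrite ?nnegrE ?mulr_ge0 ?powR_ge0 ?ler_wpM2l ?powR_ge0.
by rewrite mulrCA -powRD ?(gt_eqF t0) ?implybT // powRM ?powR_ge0 // powRrM.
Qed.

Lemma eventually_decay_le {C a t : R} : 0 <= C -> 0 < a -> 0 < t ->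
  exists N0 : nat, forall n : nat, (N0 <= n)%N -> (1 <= n)%N /\ C * n%:R `^ (- a) <= t.
Proof.
move=> C0 a0 t0; set y := (C / t) `^ a^-1.
have y0 : 0 <= y by apply: powR_ge0.
exists (maxn 1 (Num.bound y)) => n; rewrite geq_max => /andP[n1 nb]; split => //.
have yn : y <= n%:R by apply/ltW/(lt_le_trans (archi_boundP y0)); rewrite ler_nat.
have Ct : C / t <= n%:R `^ a.
  have -> : C / t = y `^ a.
    by rewrite /y -powRrM mulVf ?powRr1 ?divr_ge0 ?(ltW t0) ?lt0r_neq0.
  by apply: ge0_ler_powR; rewrite ?nnegrE ?(ltW a0).
by rewrite powRN -/(_ / _) ler_pdivrMr ?powR_gt0 ?ltr0n // -ler_pdivrMl // mulrC.
Qed.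
End Powers.

Section AdaptiveWeight.
Context {R : realType} {d} {Omega : measurableType d} {T p : nat}
  {P : probability Omega R} {X : Omega -> 'rV[R]_p}
  {par : 'I_T -> option 'I_T} {leaf : 'I_p -> 'I_T}
  {E : 'I_p -> 'rV[R]_p -> R} {n : nat} {a2 b : R} {v : 'I_T}.
Local Notation W := (what P X par leaf E n a2 b v).
Local Notation C1E := (C1 P X par leaf E v).
Local Notation C2E := (C2 P X par leaf E v).
Local Notation C3E := (C3 P X par leaf E v).

Lemma what_ge_C1 : (((n%:R `^ a2 * C1E) `^ b)%:E <= W)%E.
Proof. by rewrite /what -addeA lee_paddr // adde_ge0 ?negpow_ge0. Qed.

Lemma what_ge_C2 : (negpow C2E b <= W)%E.
Proof. by rewrite /what lee_paddr ?negpow_ge0 // lee_paddl ?lee_fin ?powR_ge0. Qed.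

Lemma what_ge_C3 : (negpow C3E b <= W)%E.
Proof. by rewrite /what lee_paddl // adde_ge0 ?negpow_ge0 ?lee_fin ?powR_ge0. Qed.

Lemma what_le {y2 y3} : (negpow C2E b <= y2%:E)%E -> (negpow C3E b <= y3%:E)%E ->
  (W <= ((n%:R `^ a2 * C1E) `^ b + y2 + y3)%:E)%E.
Proof. by move=> le2 le3; rewrite /what !EFinD !leeD. Qed.
End AdaptiveWeight.

Section WithProbability.
Context {R : realType} {d} {Omega : measurableType d} {P : probability Omega R}.

Lemma wp_to_one_eventually {G A : nat -> set Omega} (N0 : nat) :
  wp_to_one P G -> (forall n w, (N0 <= n)%N -> G n w -> A n w) -> wp_to_one P A.
Proof.
move=> [B [hB cvgB]] GA.
exists (fun n => if (N0 <= n)%N then B n else set0); split.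
  move=> n; case: ifP => n_ge; last by split.
  by have [mB sB] := hB n; split => // w /sB; apply: GA.
apply: cvg_trans cvgB; apply: near_eq_cvg; exists N0 => // n /= n_ge.
by rewrite n_ge.
Qed.

Lemma O_in_prob_of_wp_bound {G : nat -> set Omega} {Z : nat -> Omega -> \bar R}
    {r : nat -> R} (N0 : nat) (M : R) :
  wp_to_one P G -> (forall n w, (N0 <= n)%N -> G n w -> (`|Z n w| <= (M * r n)%:E)%E) ->
  O_in_prob P Z r.
Proof.
move=> [B [hB cvgB]] GZ eps eps0.
have [[N2 _ finB] cvgB'] := (fine_cvgP _ _).1 cvgB.
have [N1 _ closeB] := (cvgrPdist_lt _ _).1 cvgB' eps eps0.
exists M, (maxn N0 (maxn N1 N2)) => n; rewrite !geq_max => /and3P[n0 n1 n2].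
have [mB sB] := hB n; exists (B n); split => // [w /sB|]; first exact: GZ.
rewrite -(fineK (finB n n2)) lee_fin.
have := closeB n n1; have := ler_norm (1 - fine (P (B n))); rewrite /=; lra.
Qed.
End WithProbability.

Section AggregationWeights.
Context {R : realType} {d} {Omega : measurableType d} {P : probability Omega R}
  {T p : nat} {par : 'I_T -> option 'I_T} {leaf : 'I_p -> 'I_T}
  {X : Omega -> 'rV[R]_p} {D : 'I_p -> 'rV[R]_p -> R}
  {dhat : nat -> Omega -> 'I_p -> 'rV[R]_p -> R} {a1 C a2 b : R}.
Hypotheses (hD : forall j, inL2 P X (D j)) (hE : forall n w j, inL2 P X (dhat n w j))
  (a1_gt0 : 0 < a1) (C_gt0 : 0 < C) (b_ge0 : 0 <= b).
Local Notation N := (nrm2 P X).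
Local Notation L v := (le_set par leaf v).
Local Notation S v := (S_set par leaf v).
Local Notation W n w v := (what P X par leaf (dhat n w) n a2 b v).
Local Notation eps n := (C * n%:R `^ (- a1)).
Local Notation good n w := (forall j, N (dhat n w j \- D j) ^+ 2 <= eps n).
Local Notation grows v c := (wp_to_one P (fun n => [set w |
  ((c * n%:R `^ (Num.min a1 a2 * b))%:E <= W n w v)%E])).
Hypothesis good_wp : wp_to_one P (fun n => [set w | good n w]).

Let eps_ge0 n : 0 <= eps n.
Proof. by rewrite mulr_ge0 ?powR_ge0 ?ltW. Qed.

Let nrm2_gt0 f : N f != 0 -> 0 < N f.
Proof. by rewrite lt_def nrm2_ge0 andbT. Qed.

Lemma not_Istar_cases v : ~ in_Istar P X par leaf D v ->
  [\/ exists j k, [/\ j \in L v, k \in L v & 0 < N (D j \- D k)],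
      forall j, j \in L v -> N (D j) = 0 |
      forall j l, j \in L v -> l \in S v -> N (D j \- D l) = 0].
Proof.
move=> notI.
have [[j [k [jL kL Djk]]]|equal] :=
    pselect (exists j k, [/\ j \in L v, k \in L v & N (D j \- D k) != 0]).
  by apply: Or31; exists j, k; split => //; apply: nrm2_gt0.
have {}equal j k : j \in L v -> k \in L v -> N (D j \- D k) = 0.
  by move=> jL kL; apply: contra_notP equal => /eqP Djk; exists j, k.
have [[k [kL Dk0]]|nonnull] := pselect (exists k, k \in L v /\ N (D k) = 0).
  apply: Or32 => j jL; apply/eqP; rewrite eq_le nrm2_ge0 andbT.
  by have := nrm2_le_sub (hD j) (hD k); rewrite Dk0 addr0 equal.
apply: Or33 => j l jL lS; apply: contra_notP notI => /eqP Djl; split.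
- by move=> i iL Di0; apply: nonnull; exists i.
- exact: equal.
- by exists l, j; split => //; rewrite nrm2_subC; apply/eqP.
Qed.

Lemma grows_of_distinct_partials v j k : j \in L v -> k \in L v ->
  0 < N (D j \- D k) -> exists c, 0 < c /\ grows v c.
Proof.
move=> jL kL; set delta := N (D j \- D k) => delta_gt0.
have jk : j != k.
  by apply: contraTneq delta_gt0 => ejk; rewrite /delta ejk nrm2_subrr ltxx.
set c1 := ('C(#|L v|, 2)%:R)^-1 * (delta ^+ 2 / 4).
have c1_gt0 : 0 < c1.
  have L_gt1 : (1 < #|L v|)%N by apply/card_gt1P; exists j, k.
  by rewrite mulr_gt0 ?invr_gt0 ?ltr0n ?bin_gt0 ?divr_gt0 ?exprn_gt0.
exists (c1 `^ b); split; first exact: powR_gt0.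
have small_gt0 : 0 < delta ^+ 2 / 16 by rewrite divr_gt0 ?exprn_gt0.
have [N0 small] := eventually_decay_le (ltW C_gt0) a1_gt0 small_gt0.
apply: (wp_to_one_eventually N0 good_wp) => n w /small[n_ge1 eps_small] good_nw /=.
apply: (le_trans _ what_ge_C1); rewrite lee_fin.
apply: powR_growth_le; rewrite ?ler1n ?ge_min ?lexx ?orbT //.
apply: (le_trans _ (C1_ge_term (E := dhat n w) jL kL jk)).
by rewrite ler_wpM2l ?invr_ge0 // (pilot_sub_sqr_ge (hE n w) hD good_nw eps_small).
Qed.

Lemma grows_of_negpow_decay {v} (F : nat -> Omega -> R) K : 0 <= K ->
  (forall n w, (negpow (F n w) b <= W n w v)%E) ->
  (forall n w, good n w -> 0 <= F n w <= K * eps n) ->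
  exists c, 0 < c /\ grows v c.
Proof.
move=> K0 FW FK; set K' := (K + 1) * C.
have K'_gt0 : 0 < K' by rewrite mulr_gt0 //; lra.
exists (K' `^ (- b)); split; first exact: powR_gt0.
apply: (wp_to_one_eventually 1 good_wp) => n w n_ge1 /FK/andP[F0 F_small] /=.
apply: (le_trans _ (FW n w)).
apply: (negpow_growth_le (a := a1) _ _ K'_gt0 F0 _ b_ge0).
- by rewrite ler1n.
- by rewrite ge_min lexx.
apply: (le_trans F_small); rewrite /K' -mulrA ler_wpM2r //; lra.
Qed.

Lemma grows_of_null_partials v : (forall j, j \in L v -> N (D j) = 0) ->
  exists c, 0 < c /\ grows v c.
Proof.
move=> D0; apply: (grows_of_negpow_decay (fun n w => C2 P X par leaf (dhat n w) v) p%:R)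
  => // n w; first exact: what_ge_C2.
move=> good_nw; rewrite C2_ge0 /= C2_le // => j jL.
exact: (pilot_sqr_le (hE n w) hD good_nw (D0 j jL)).
Qed.

Lemma grows_of_equal_siblings v :
  (forall j l, j \in L v -> l \in S v -> N (D j \- D l) = 0) ->
  exists c, 0 < c /\ grows v c.
Proof.
move=> Dsib; apply: (grows_of_negpow_decay (fun n w => C3 P X par leaf (dhat n w) v)
  (p%:R * (p%:R * 4))) => // n w; first exact: what_ge_C3.
move=> good_nw; rewrite C3_ge0 /= -!mulrA C3_le ?pmulr_rge0 // => j l jL lS.
exact: (pilot_sub_sqr_le (hE n w) hD good_nw (Dsib j l jL lS)).
Qed.

Lemma what_grows_not_Istar v : ~ in_Istar P X par leaf D v ->
  exists c, 0 < c /\ grows v c.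
Proof.
case/not_Istar_cases => [[j [k [jL kL Djk]]]|D0|Dsib].
- exact: grows_of_distinct_partials jL kL Djk.
- exact: grows_of_null_partials.
- exact: grows_of_equal_siblings.
Qed.

Lemma Istar_C2_C3_lb {v} : in_Istar P X par leaf D v ->
  exists c2 c3 t, [/\ 0 < c2, 0 < c3, 0 < t &
    forall (E : 'I_p -> 'rV[R]_p -> R) e, (forall j, inL2 P X (E j)) ->
      (forall j, N (E j \- D j) ^+ 2 <= e) -> e <= t ->
      c2 <= C2 P X par leaf E v /\ c3 <= C3 P X par leaf E v].
Proof.
case=> nonnull _ [s [j [sS jL Dsj]]].
set x2 := N (D j); set x3 := N (D j \- D s).
have x2_gt0 : 0 < x2 by apply/nrm2_gt0/eqP/nonnull.
have x3_gt0 : 0 < x3 by rewrite /x3 nrm2_subC; apply/nrm2_gt0/eqP.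
have L_gt0 : (0 < #|L v|)%N by apply/card_gt0P; exists j.
have SL_gt0 : (0 < #|S v| * #|L v|)%N.
  by rewrite muln_gt0 L_gt0 andbT; apply/card_gt0P; exists s.
exists ((#|L v|%:R)^-1 * (x2 ^+ 2 / 4)), (((#|S v| * #|L v|)%:R)^-1 * (x3 ^+ 2 / 4)),
  (Num.min (x2 ^+ 2) (x3 ^+ 2) / 16).
split; rewrite ?mulr_gt0 ?invr_gt0 ?ltr0n ?divr_gt0 ?lt_min ?exprn_gt0 //.
move=> E e hE' herr e_small; split.
- apply: (le_trans _ (C2_ge_term jL)); rewrite ler_wpM2l ?invr_ge0 //.
  apply: (pilot_sqr_ge hE' hD herr); apply: (le_trans e_small).
  by rewrite ler_pM2r // ge_min lexx.
- apply: (le_trans _ (C3_ge_term jL sS)); rewrite ler_wpM2l ?invr_ge0 //.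
  apply: (pilot_sub_sqr_ge hE' hD herr); apply: (le_trans e_small).
  by rewrite ler_pM2r // ge_min lexx orbT.
Qed.

Lemma what_bounded_Istar v : in_Istar P X par leaf D v ->
  O_in_prob P (fun n w => W n w v) (fun n => 1 + n%:R `^ ((a2 - a1) * b)).
Proof.
move=> vI; have [c2 [c3 [t [c2_gt0 c3_gt0 t_gt0 C2_C3_lb]]]] := Istar_C2_C3_lb vI.
have [_ equal _] := vI.
set K := p%:R * (p%:R * 4) * C.
have K_ge0 : 0 <= K by apply: mulr_ge0 (ltW C_gt0); rewrite !mulr_ge0.
have [N0 small] := eventually_decay_le (ltW C_gt0) a1_gt0 t_gt0.
apply: (O_in_prob_of_wp_bound N0 (K `^ b + c2 `^ (- b) + c3 `^ (- b)) good_wp).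
move=> n w /small[n_ge1 eps_small] good_nw.
have [c2_le c3_le] := C2_C3_lb _ _ (hE n w) good_nw eps_small.
have C1_small : C1 P X par leaf (dhat n w) v <= K * n%:R `^ (- a1).
  rewrite /K -!mulrA C1_le ?pmulr_rge0 // => j k jL kL.
  exact: (pilot_sub_sqr_le (hE n w) hD good_nw (equal j k jL kL)).
rewrite gee0_abs; last by apply: (le_trans _ what_ge_C1); rewrite lee_fin powR_ge0.
apply: (le_trans (what_le (negpow_le c2_gt0 c2_le b_ge0) (negpow_le c3_gt0 c3_le b_ge0))).
have n_gt0 : (0 : R) < n%:R by rewrite ltr0n.
have := powR_decay_le (a2 := a2) n_gt0 K_ge0 C1_ge0 C1_small b_ge0.
rewrite lee_fin; have := powR_ge0 K b; have := powR_ge0 c2 (- b).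
have := powR_ge0 c3 (- b); have := powR_ge0 n%:R ((a2 - a1) * b); nra.
Qed.

End AggregationWeights.

Theorem mainTheorem3 (R : realType) (d : measure_display) (Omega : measurableType d)
  (P : probability Omega R) (T p : nat)
  (par : 'I_T -> option 'I_T) (leaf : 'I_p -> 'I_T)
  (X : Omega -> 'rV[R]_p) (m : 'rV[R]_p -> R)
  (dhat : nat -> Omega -> 'I_p -> 'rV[R]_p -> R)
  (a1 C a2 b : R) :
  is_rooted_tree par -> leaves_identified par leaf ->
  (forall x, differentiable m x) ->
  (forall j, inL2 P X (partial m j)) ->
  (forall n w j, inL2 P X (dhat n w j)) ->
  0 < a1 -> 0 < C ->
  wp_to_one P (fun n => [set w | forall j : 'I_p,
     nrm2 P X (dhat n w j \- partial m j) ^+ 2 <= C * n%:R `^ (- a1)]) ->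
  0 < a2 -> 0 < b ->
  (forall v : 'I_T, ~ in_Istar P X par leaf (partial m) v ->
     exists c : R, 0 < c /\
       wp_to_one P (fun n => [set w |
         ((c * n%:R `^ (Num.min a1 a2 * b))%:E <=
            what P X par leaf (dhat n w) n a2 b v)%E])) /\
  (forall v : 'I_T, in_Istar P X par leaf (partial m) v ->
     O_in_prob P (fun n w => what P X par leaf (dhat n w) n a2 b v)
             (fun n => 1 + n%:R `^ ((a2 - a1) * b))).
Proof.
move=> _ _ _ hD hE a1_gt0 C_gt0 good_wp _ /ltW b_ge0; split=> v.
- exact: (what_grows_not_Istar hD hE a1_gt0 C_gt0 b_ge0 good_wp).
- exact: (what_bounded_Istar hD hE a1_gt0 C_gt0 b_ge0 good_wp).
Qed.
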